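(* Consider the linear content-access game described in the context, with parameters $\tau>0$, beliefs $\pi_G\in[0,1]$, $\pi_B=1-\pi_G$, push rates $\lambda_{ps}(G)\geq \lambda_{ps}(B)>0$ and pull rate $\lambda_{pu}>0$, and let the common threshold $\alpha$ of all other users satisfy $0\le \alpha\le \beta_{\tau,B}$. Then: (i) if $\frac{\pi_G}{\lambda_{ps}(G)} \geq \frac{\pi_B}{\lambda_{ps}(B)}$, then $\beta^*(\alpha)=0$ is a best response to $\alpha$; (ii) if $\frac{\pi_G}{\lambda_{ps}(G)} \leq \frac{\pi_B}{\lambda_{ps}(B)}$ and $\frac{\pi_G}{\lambda_{ps}(G)+\lambda_{pu}} \geq \frac{\pi_B}{\lambda_{ps}(B)+\lambda_{pu}}$, then $\beta^*(\alpha)=\alpha$ is a best response to $\alpha$; (iii) if $\frac{\pi_G}{\lambda_{ps}(G)} \leq \frac{\pi_B}{\lambda_{ps}(B)}$ and $\frac{\pi_G}{\lambda_{ps}(G)+\lambda_{pu}} < \frac{\pi_B}{\lambda_{ps}(B)+\lambda_{pu}}$, then $\beta^*(\alpha)=\beta_{\tau,B}$ is a best response to $\alpha$.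
   Context: A content has a type $\theta\in\{G,B\}$ (good/bad) and lifetime $\tau>0$. Users hold beliefs $\pi_G\in[0,1]$ that the content is good and $\pi_B=1-\pi_G$ that it is bad. Each (pull) user uses a threshold strategy: access the content once its viewcount reaches a threshold. All users other than a tagged user use a common threshold $\alpha\ge 0$; the tagged user uses $\beta\ge0$ (a single user's deviation does not affect the viewcount). Linear dynamics: for a content of type $\theta$, with push rate $\lambda_{ps}(\theta)>0$ (assumed $\lambda_{ps}(G)\ge\lambda_{ps}(B)$) and a type-independent pull rate $\lambda_{pu}>0$, let $t_\alpha(\theta)=\alpha/\lambda_{ps}(\theta)$ and define the viewcount $X(t,\theta)=\lambda_{ps}(\theta)\,t+\lambda_{pu}\,(t-t_\alpha(\theta))^+$ for $t\ge0$. For $\beta\ge0$ let $t_\beta(\theta)=\min\{t\ge 0: X(t,\theta)=\beta\}$. Let $\beta_{\tau,B}=X(\tau,B)$, i.e. the value with $t_{\beta_{\tau,B}}(B)=\tau$. The tagged user's utility is $U(\alpha,\beta)=\pi_G(\tau-t_\beta(G))-\pi_B(\tau-t_\beta(B))$ for $0\le\beta\le\beta_{\tau,B}$, and a best response $\beta^*(\alpha)$ is a maximizer of $U(\alpha,\cdot)$ over $[0,\beta_{\tau,B}]$. *)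

From mathcomp Require Import all_boot all_order all_algebra.
From mathcomp Require Import boolp classical_sets reals.
Set Implicit Arguments. Unset Strict Implicit. Unset Printing Implicit Defensive.
Import Order.TTheory GRing.Theory Num.Theory.
Local Open Scope ring_scope.
Local Open Scope classical_set_scope.

Section Game.
Variable R : realType.

Definition t_alpha (lps alpha : R) : R := alpha / lps.

Definition viewcount (lps lpu alpha t : R) : R :=
  lps * t + lpu * Num.max (t - t_alpha lps alpha) 0.

(* t_beta(theta) = min {t >= 0 : X(t,theta) = beta}, rendered as the infimum
   of that set (which coincides with the minimum whenever it exists). *)
Definition t_beta (lps lpu alpha beta : R) : R :=
  inf [set t : R | 0 <= t /\ viewcount lps lpu alpha t = beta].

Definition beta_tauB (lpsB lpu alpha tau : R) : R := viewcount lpsB lpu alpha tau.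

Definition utility (tau piG lpsG lpsB lpu alpha beta : R) : R :=
  piG * (tau - t_beta lpsG lpu alpha beta)
  - (1 - piG) * (tau - t_beta lpsB lpu alpha beta).

Definition best_response (tau piG lpsG lpsB lpu alpha beta : R) : Prop :=
  0 <= beta <= beta_tauB lpsB lpu alpha tau /\
  forall b : R, 0 <= b <= beta_tauB lpsB lpu alpha tau ->
    utility tau piG lpsG lpsB lpu alpha b <= utility tau piG lpsG lpsB lpu alpha beta.

End Game.

From mathcomp Require Import all_boot all_order all_algebra.
From mathcomp Require Import boolp classical_sets reals.
From mathcomp Require Import ring lra.
Set Implicit Arguments. Unset Strict Implicit. Unset Printing Implicit Defensive.
Import Order.TTheory GRing.Theory Num.Theory.
Local Open Scope ring_scope.
Local Open Scope classical_set_scope.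

(* The viewcount is strictly increasing in t, so t_beta is its inverse: a
   piecewise linear function of beta with slope 1/lps below alpha and
   1/(lps + lpu) above it.  The utility is therefore, up to a constant, minus
   a broken line in beta with slopes
   pi_G/lps(G) - pi_B/lps(B) on [0, alpha] and
   pi_G/(lps(G) + lpu) - pi_B/(lps(B) + lpu) on [alpha, beta_{tau,B}];
   the signs of the two slopes decide whether 0, the kink alpha or the right
   end beta_{tau,B} minimizes the broken line.
   In case (i) the second slope is nonnegative as well, because
   lps(B) <= lps(G) forces pi_B <= pi_G. *)

Section AccessTime.
Variable R : realType.

Definition access_time (lps lpu alpha beta : R) : R :=
  Num.min beta alpha / lps + Num.max (beta - alpha) 0 / (lps + lpu).

Variables lps lpu alpha : R.
Hypotheses (lps_gt0 : 0 < lps) (lpu_gt0 : 0 < lpu).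

Lemma viewcount_increasing : {homo viewcount lps lpu alpha : t s / t < s}.
Proof.
move=> t s lt_ts; rewrite /viewcount; set c := t_alpha lps alpha.
by move: lps_gt0 lpu_gt0; rewrite !maxEle; case: ifP => ?; case: ifP => ?; nra.
Qed.

Lemma access_timeK : cancel (access_time lps lpu alpha) (viewcount lps lpu alpha).
Proof.
move=> beta.
have lps_neq0 : lps != 0 by rewrite gt_eqF.
have lpsu_neq0 : lps + lpu != 0 by rewrite gt_eqF // addr_gt0.
rewrite /viewcount /t_alpha /access_time minEle.
have [le_ba|lt_ab] := leP beta alpha.
- rewrite maxEle subr_le0 le_ba mul0r addr0 maxEle subr_le0.
  by rewrite ler_pM2r ?invr_gt0 // le_ba mulr0 addr0 mulrC divfK.
- rewrite maxEle subr_le0 leNgt lt_ab /= addrAC subrr add0r maxEle.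
  rewrite leNgt divr_gt0 ?subr_gt0 ?addr_gt0 //=.
  by field; rewrite lpsu_neq0 lps_neq0.
Qed.

Lemma access_time_ge0 beta : 0 <= alpha -> 0 <= beta ->
  0 <= access_time lps lpu alpha beta.
Proof.
move=> alpha_ge0 beta_ge0; rewrite /access_time.
have min_ge0 : 0 <= Num.min beta alpha by rewrite minEle; case: ifP.
have max_ge0 : 0 <= Num.max (beta - alpha) 0.
  by rewrite maxEle; case: ifP => // /negbT; rewrite -ltNge => /ltW.
by rewrite addr_ge0 // divr_ge0 // ltW // addr_gt0.
Qed.

Lemma t_beta_access_time beta : 0 <= alpha -> 0 <= beta ->
  t_beta lps lpu alpha beta = access_time lps lpu alpha beta.
Proof.
move=> alpha_ge0 beta_ge0; rewrite /t_beta.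
suff -> : [set t | 0 <= t /\ viewcount lps lpu alpha t = beta]
    = [set access_time lps lpu alpha beta] by rewrite inf1.
apply/seteqP; split => t /=; last first.
  by move=> ->; split; [exact: access_time_ge0 | exact: access_timeK].
case=> _ vc_t; apply: (inc_inj (le_mono viewcount_increasing)).
by rewrite vc_t access_timeK.
Qed.

End AccessTime.

Section BrokenLine.
Variable R : realType.

Definition broken_line (s1 s2 alpha b : R) : R :=
  s1 * Num.min b alpha + s2 * Num.max (b - alpha) 0.

Lemma broken_line_le s1 s2 alpha b : b <= alpha ->
  broken_line s1 s2 alpha b = s1 * b.
Proof.
move=> le_ba; rewrite /broken_line minEle le_ba maxEle subr_le0 le_ba.
by rewrite mulr0 addr0.
Qed.

Lemma broken_line_ge s1 s2 alpha b : alpha <= b ->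
  broken_line s1 s2 alpha b = s1 * alpha + s2 * (b - alpha).
Proof.
rewrite le_eqVlt => /predU1P[<-|lt_ab]; first by rewrite broken_line_le // subrr mulr0 addr0.
by rewrite /broken_line minEle leNgt lt_ab maxEle subr_le0 leNgt lt_ab.
Qed.

Variables s1 s2 alpha b : R.

Lemma broken_line_min_at0 : 0 <= alpha -> 0 <= b -> 0 <= s1 -> 0 <= s2 ->
  broken_line s1 s2 alpha 0 <= broken_line s1 s2 alpha b.
Proof.
move=> alpha_ge0 b_ge0 s1_ge0 s2_ge0; rewrite broken_line_le // mulr0.
have [le_ba|lt_ab] := leP b alpha; first by rewrite broken_line_le //; nra.
by rewrite broken_line_ge; [nra | exact: ltW].
Qed.

Lemma broken_line_min_at_kink : s1 <= 0 -> 0 <= s2 ->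
  broken_line s1 s2 alpha alpha <= broken_line s1 s2 alpha b.
Proof.
move=> s1_le0 s2_ge0; rewrite broken_line_le //.
have [le_ba|lt_ab] := leP b alpha; first by rewrite broken_line_le //; nra.
by rewrite broken_line_ge; [nra | exact: ltW].
Qed.

Lemma broken_line_min_at_right M : alpha <= M -> b <= M -> s1 <= 0 -> s2 <= 0 ->
  broken_line s1 s2 alpha M <= broken_line s1 s2 alpha b.
Proof.
move=> le_aM le_bM s1_le0 s2_le0; rewrite broken_line_ge //.
have [le_ba|lt_ab] := leP b alpha; first by rewrite broken_line_le //; nra.
by rewrite broken_line_ge; [nra | exact: ltW].
Qed.

End BrokenLine.

Lemma ler_ratios_addr (R : realFieldType) (pB pG lB lG mu : R) :
  0 < lB -> lB <= lG -> 0 <= mu -> 0 <= pB ->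
  pB / lB <= pG / lG -> pB / (lB + mu) <= pG / (lG + mu).
Proof.
move=> lB_gt0 le_BG mu_ge0 pB_ge0.
have lG_gt0 : 0 < lG by exact: lt_le_trans le_BG.
have lBmu_gt0 : 0 < lB + mu by rewrite ltr_wpDr.
have lGmu_gt0 : 0 < lG + mu by rewrite ltr_wpDr.
rewrite ler_pdivrMr // mulrAC ler_pdivlMr // => cross.
have le_pBG : pB <= pG.
  by rewrite -(ler_pM2r lB_gt0); apply: le_trans cross; rewrite ler_wpM2l.
by rewrite ler_pdivrMr // mulrAC ler_pdivlMr // mulrDr mulrDr lerD // ler_wpM2r.
Qed.

Section Utility.
Variables (R : realType) (tau piG lpsG lpsB lpu alpha : R).
Hypotheses (lpsG_gt0 : 0 < lpsG) (lpsB_gt0 : 0 < lpsB) (lpu_gt0 : 0 < lpu).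
Hypothesis alpha_ge0 : 0 <= alpha.

Let near_slope := piG / lpsG - (1 - piG) / lpsB.
Let far_slope := piG / (lpsG + lpu) - (1 - piG) / (lpsB + lpu).

Lemma utility_broken_line b : 0 <= b ->
  utility tau piG lpsG lpsB lpu alpha b =
  (piG - (1 - piG)) * tau - broken_line near_slope far_slope alpha b.
Proof.
move=> b_ge0; rewrite /utility !t_beta_access_time //.
by rewrite /access_time /broken_line /near_slope /far_slope; ring.
Qed.

Lemma best_response_of_broken_line_min beta :
  0 <= beta <= beta_tauB lpsB lpu alpha tau ->
  (forall b, 0 <= b <= beta_tauB lpsB lpu alpha tau ->
     broken_line near_slope far_slope alpha beta
     <= broken_line near_slope far_slope alpha b) ->
  best_response tau piG lpsG lpsB lpu alpha beta.
Proof.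
move=> /[dup] beta_range /andP[beta_ge0 _] beta_min; split=> // b.
move=> /[dup] b_range /andP[b_ge0 _].
by rewrite !utility_broken_line // lerD2l lerN2 beta_min.
Qed.

End Utility.

Theorem lemma1 (R : realType) (tau piG lpsG lpsB lpu alpha : R)
  (htau : 0 < tau) (hpi0 : 0 <= piG) (hpi1 : piG <= 1)
  (hB : 0 < lpsB) (hGB : lpsB <= lpsG) (hpu : 0 < lpu)
  (ha0 : 0 <= alpha) (ha1 : alpha <= beta_tauB lpsB lpu alpha tau) :
  (piG / lpsG >= (1 - piG) / lpsB ->
     best_response tau piG lpsG lpsB lpu alpha 0) /\
  (piG / lpsG <= (1 - piG) / lpsB ->
   piG / (lpsG + lpu) >= (1 - piG) / (lpsB + lpu) ->
     best_response tau piG lpsG lpsB lpu alpha alpha) /\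
  (piG / lpsG <= (1 - piG) / lpsB ->
   piG / (lpsG + lpu) < (1 - piG) / (lpsB + lpu) ->
     best_response tau piG lpsG lpsB lpu alpha (beta_tauB lpsB lpu alpha tau)).
Proof.
have lpsG_gt0 : 0 < lpsG by exact: lt_le_trans hGB.
have betaB_ge0 : 0 <= beta_tauB lpsB lpu alpha tau by exact: le_trans ha1.
split; [|split] => near_sign.
- have far_sign : (1 - piG) / (lpsB + lpu) <= piG / (lpsG + lpu).
    by apply: ler_ratios_addr; rewrite // ?subr_ge0 // ltW.
  apply: best_response_of_broken_line_min; rewrite // ?lexx ?betaB_ge0 //.
  move=> b /andP[b_ge0 _].
  by apply: broken_line_min_at0; rewrite ?subr_ge0.
- move=> far_sign; apply: best_response_of_broken_line_min; rewrite // ?ha0 //.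
  by move=> b _; apply: broken_line_min_at_kink; rewrite ?subr_le0 ?subr_ge0.
- move=> far_sign; apply: best_response_of_broken_line_min; rewrite // ?betaB_ge0 ?lexx //.
  move=> b /andP[_ b_le]; apply: broken_line_min_at_right => //.
  + by rewrite subr_le0.
  + by rewrite subr_le0 ltW.
Qed.
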